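(* If $X$ and $Y$ are directed acyclic graphs with $|V(X)|=|V(Y)|=n$, then $\mathrm{DFS}(X,Y)$ is acyclic, i.e. it contains no directed cycle.
   Context: Directed graphs are finite and loopless but may have multiple edges. For distinct vertices $a,b$ of a directed graph $X$, $m_X(a,b)\ge 0$ denotes the number of edges from $a$ to $b$ in $X$. A directed graph is acyclic if it has no directed cycle. For directed graphs $X,Y$ with $|V(X)|=|V(Y)|$, the directed friends-and-seats graph $\mathrm{DFS}(X,Y)$ is defined as follows. Its vertices are the bijections $\sigma:V(X)\to V(Y)$. For every bijection $\sigma$ and every ordered pair $(a,b)$ of distinct vertices of $X$, it has exactly $m_X(a,b)\,m_Y(\sigma(a),\sigma(b))$ edges from $\sigma$ to $\sigma\circ(a\,b)$, where $(a\,b)$ is the transposition exchanging $a$ and $b$. It has no other edges. *)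

From mathcomp Require Import all_boot all_order all_fingroup.
Set Implicit Arguments. Unset Strict Implicit. Unset Printing Implicit Defensive.

(* A finite directed multigraph on vertex type T is given by its edge
   multiplicity function m : T -> T -> nat (m a b = number of edges a -> b). *)
Definition loopless (T : finType) (m : T -> T -> nat) : Prop :=
  forall a : T, m a a = 0.

Definition has_directed_cycle (T : finType) (m : T -> T -> nat) : Prop :=
  exists c : seq T, [&& c != [::], uniq c & path.cycle (fun x y => 0 < m x y) c].

Definition acyclic (T : finType) (m : T -> T -> nat) : Prop :=
  ~ has_directed_cycle m.

Definition is_bij (TX TY : finType) (f : {ffun TX -> TY}) : bool :=
  injectiveb f && [forall y, exists x, f x == y].

Definition bijs (TX TY : finType) := {f : {ffun TX -> TY} | is_bij f}.

Definition swap_comp (TX TY : finType) (s : bijs TX TY) (a b : TX)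
  : {ffun TX -> TY} := [ffun x => val s (tperm a b x)].

Definition DFS (TX TY : finType) (mX : TX -> TX -> nat) (mY : TY -> TY -> nat)
  (s t : bijs TX TY) : nat :=
  \sum_(a : TX) \sum_(b : TX | a != b)
     (if val t == swap_comp s a b then mX a b * mY (val s a) (val s b) else 0).

From mathcomp Require Import all_boot all_order all_fingroup.
From mathcomp Require Import zify.

(* Rank every vertex of X and of Y by the number of vertices reachable from
   it; acyclicity makes ranks drop strictly along edges.  An edge
   s -> s o (a b) of DFS(X,Y) exchanges the seats of a and b, where a has
   the larger X-rank and sits on the seat of larger Y-rank, so by the
   rearrangement inequality it strictly decreases the potential
   sum_x rankX(x) * rankY(s x).  A strictly decreasing potential rules out
   directed cycles. *)

Definition reach_card {T : finType} (e : rel T) (x : T) : nat :=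
  #|[pred y | connect e x y]|.

Lemma reach_card_lt (T : finType) (e : rel T) :
  ~ (exists c : seq T, [&& c != [::], uniq c & path.cycle e c]) ->
  forall a b, e a b -> reach_card e b < reach_card e a.
Proof.
move=> no_cycle a b eab; apply/proper_card/properP; split.
  by apply/subsetP=> y; rewrite !inE; apply: connect_trans (connect1 eab).
exists a; rewrite !inE ?connect0 //; apply/negP=> /connectP [p pth a_last].
case: (shortenP pth) a_last => p' pth' uniq_p' _ a_last.
apply: no_cycle; exists (b :: p').
by rewrite uniq_p' /= rcons_path pth' -a_last eab /=.
Qed.

Lemma decreasing_potential_no_cycle (T : eqType) (e : rel T) (f : T -> nat) :
  (forall x y, e x y -> f y < f x) ->
  ~ (exists c : seq T, [&& c != [::], uniq c & path.cycle e c]).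
Proof.
move=> f_dec [[|x s] // /and3P [_ _ cyc]].
have gt_trans : transitive (fun u v : T => f v < f u).
  by move=> u v w /= fuv fwu; apply: ltn_trans fwu fuv.
move: (sub_cycle f_dec cyc); rewrite (cycle_all2rel gt_trans) /=.
by move/allrelP/(_ x x (mem_head _ _) (mem_head _ _)); rewrite ltnn.
Qed.

Lemma sum_mul_tperm_lt (T : finType) (f g : T -> nat) (a b : T) :
  f b < f a -> g b < g a ->
  \sum_x f x * g (tperm a b x) < \sum_x f x * g x.
Proof.
move=> fba gba; have neq_ab : a != b by apply: contraTneq fba => ->; rewrite ltnn.
have split_ab (F : T -> nat) :
    \sum_x F x = F a + (F b + \sum_(x | (x != a) && (x != b)) F x).
  by rewrite (bigD1 a) // (bigD1 b) 1?eq_sym.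
rewrite !split_ab tpermL tpermR.
under eq_bigr => x /andP [xa xb] do rewrite tpermD 1?eq_sym //.
set S := \sum_(x | _) _; nia.
Qed.

Lemma DFS_edge (TX TY : finType) (mX : TX -> TX -> nat) (mY : TY -> TY -> nat)
    (s t : bijs TX TY) :
  0 < DFS mX mY s t ->
  exists a b, [/\ val t = swap_comp s a b, 0 < mX a b & 0 < mY (val s a) (val s b)].
Proof.
rewrite /DFS lt0n sum_nat_seq_neq0 => /hasP [a _].
rewrite sum_nat_seq_neq0 => /hasP [b _ /andP [_]].
case: (val t =P swap_comp s a b) => [-> | _]; last by rewrite eqxx.
rewrite -lt0n muln_gt0 => /andP [mXab mYab].
by exists a, b.
Qed.

Theorem mainTheorem5 (TX TY : finType) (n : nat)
  (mX : TX -> TX -> nat) (mY : TY -> TY -> nat) :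
  #|TX| = n -> #|TY| = n ->
  loopless mX -> loopless mY ->
  acyclic mX -> acyclic mY ->
  acyclic (DFS mX mY).
Proof.
move=> _ _ _ _ acX acY.
pose rX := reach_card (fun x y => 0 < mX x y).
pose rY := reach_card (fun x y => 0 < mY x y).
pose potential (s : bijs TX TY) := \sum_x rX x * rY (val s x).
apply: (@decreasing_potential_no_cycle _ _ potential).
move=> s t /DFS_edge [a [b [t_swap mXab mYab]]].
rewrite /potential t_swap; under eq_bigr => x _ do rewrite ffunE.
apply: (@sum_mul_tperm_lt _ rX (fun x => rY (val s x))).
- exact: reach_card_lt acX _ _ mXab.
- exact: reach_card_lt acY _ _ mYab.
Qed.
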